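(* Let $R,S\in GL(2,\mathbb{C})$ be diagonalizable matrices with eigenvalues $r_1,r_2\in S^1$ and $s_1,s_2\in S^1$ respectively, such that $r_1\ne r_2$, $s_1\ne s_2$, $\{r_1,r_2\}\cap\{s_1,s_2\}=\emptyset$, and $1$ is an eigenvalue of $RS^{-1}$. Then there is a non-degenerate Hermitian form $\langle\cdot,\cdot\rangle_H$ on $\mathbb{C}^2$ invariant under both $R$ and $S$, unique up to multiplication by a real scalar. Moreover, $\langle\cdot,\cdot\rangle_H$ is definite if and only if the two pairs $\{r_1,r_2\}$ and $\{s_1,s_2\}$ interlace on the unit circle.
   Context: $S^1$ is the unit circle in $\mathbb{C}$. A Hermitian form $h$ is invariant under $R$ if $h(Rv,Rw)=h(v,w)$ for all $v,w\in\mathbb{C}^2$. Two pairs of distinct points on a circle interlace if each of the two arcs determined by one pair contains exactly one point of the other pair. *)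

From HB Require Import structures.
From mathcomp Require Import all_boot all_order all_algebra.
From mathcomp Require Import reals trigo.
From mathcomp Require Import complex.
Set Implicit Arguments. Unset Strict Implicit. Unset Printing Implicit Defensive.
Import Order.TTheory GRing.Theory Num.Theory.
Local Open Scope ring_scope.
Local Open Scope complex_scope.

Section Defs.
Variable R : realType.
Local Notation C := (R[i]).

Definition hform (H : 'M[C]_2) (v w : 'cV[C]_2) : C :=
  ((map_mx Num.conj v)^T *m H *m w) ord0 ord0.

Definition hermitian_mx (H : 'M[C]_2) : Prop :=
  map_mx Num.conj H^T = H.

Definition nondegenerate_form (H : 'M[C]_2) : Prop :=
  forall v : 'cV[C]_2, (forall w, hform H v w = 0) -> v = 0.

Definition invariant_form (H : 'M[C]_2) (A : 'M[C]_2) : Prop :=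
  forall v w : 'cV[C]_2, hform H (A *m v) (A *m w) = hform H v w.

Definition definite_form (H : 'M[C]_2) : Prop :=
  (forall v : 'cV[C]_2, v != 0 -> 0 < hform H v v) \/
  (forall v : 'cV[C]_2, v != 0 -> hform H v v < 0).

Definition expi (t : R) : C := (cos t +i* sin t).

(* open counterclockwise arc of the unit circle from a to b (a, b distinct) *)
Definition ccw_arc (a b z : C) : Prop :=
  exists th t : R, [/\ 0 < t, t < th, th < 2 * pi, b = a * expi th & z = a * expi t].

Definition interlace (a b c d : C) : Prop :=
  (ccw_arc a b c <-> ~ ccw_arc a b d) /\ (ccw_arc b a c <-> ~ ccw_arc b a d).

End Defs.

(* Let w != 0 with R w = S w.  No eigenvalue of R is one of S, so w is not an
   eigenvector, and R, S have eigenbases (e_1, e_2), (f_1, f_2) adapted to w: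
   w = e_1 + e_2, and f_1 = (S - s_2) w = (r_1 - s_2) e_1 + (r_2 - s_2) e_2,
   f_2 = (S - s_1) w = (r_1 - s_1) e_1 + (r_2 - s_1) e_2.  A Hermitian form h is
   R-invariant iff it is real diagonal in the basis e, h(e_i, e_i) = d_i, and it
   is then S-invariant iff h(f_1, f_2) = 0, i.e. d_1 k_1 + d_2 k_2 = 0 with
   k_i = conj(r_i - s_2) (r_i - s_1).  On the unit circle k_i = rho_i z with
   rho_i real and a common phase z, so the invariant forms are the real
   multiples of (d_1, d_2) = (rho_2, - rho_1), which are definite iff
   rho_1 rho_2 < 0.  In half-angles measured from r_1, rho_1 and rho_2 are
   products of sines whose signs tell on which arcs between r_1 and r_2 the
   points s_1 and s_2 lie. *)

From HB Require Import structures.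
From mathcomp Require Import all_boot all_order all_algebra.
From mathcomp Require Import reals trigo.
From mathcomp Require Import complex.
From mathcomp Require Import ring lra.

Set Implicit Arguments.
Unset Strict Implicit.
Unset Printing Implicit Defensive.

Import Order.TTheory GRing.Theory Num.Theory.
Local Open Scope complex_scope.
Local Open Scope ring_scope.
Local Open Scope sesquilinear_scope.

Section UnitCircle.
Variable R : realType.
Local Notation C := R[i].
Local Notation E := (@expi R).

Lemma expiD t u : E (t + u) = E t * E u.
Proof. by rewrite /expi cosD sinD; simpc; congr (_ +i* _); ring. Qed.

Lemma expi0 : E 0 = 1.
Proof. by rewrite /expi cos0 sin0. Qed.

Lemma expiN t : E (- t) = (E t)^*.
Proof. by rewrite /expi cosN sinN. Qed.

Lemma expi_2pi : E (2 * pi) = 1.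
Proof. by rewrite /expi mulr_natl cos2pi sin2pi. Qed.

Lemma conj_expiK t : (E t)^* * E t = 1.
Proof. by rewrite -expiN -expiD addNr expi0. Qed.

Lemma expi_neq0 t : E t != 0.
Proof. by apply: contra_eq_neq (conj_expiK t) => ->; rewrite mulr0 eq_sym oner_neq0. Qed.

Lemma expi_sub a b : E (2 * a) - E (2 * b) = (2 * sin (a - b)) *i * E (a + b).
Proof.
have sub d t : E (d + t) - E (- d + t) = (2 * sin d) *i * E t.
  rewrite !expiD -mulrBl expiN; congr (_ * _).
  by rewrite /expi; simpc; congr (_ +i* _); ring.
by rewrite -(sub (a - b) (a + b)); congr (expi _ - expi _); ring.
Qed.

Lemma sgr_sin (x : R) : - pi < x < pi -> Num.sg (sin x) = Num.sg x.
Proof.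
move=> /andP[lx ux]; have [x0|x0|->] := ltrgt0P x; last by rewrite sin0.
  by rewrite !gtr0_sg // sin_gt0_pi // x0.
have : 0 < sin (- x) by apply: sin_gt0_pi; rewrite oppr_gt0 x0 ltrNl.
by rewrite sinN oppr_gt0 => sx; rewrite !ltr0_sg.
Qed.

Lemma expi_inj (t u : R) : 0 <= t < 2 * pi -> 0 <= u < 2 * pi -> E t = E u -> t = u.
Proof.
move=> /andP[t0 t2] /andP[u0 u2] etu.
have half (x : R) : 2 * (x / 2) = x by field.
have : E (2 * (t / 2)) - E (2 * (u / 2)) = 0 by rewrite !half etu subrr.
rewrite expi_sub => /eqP; rewrite mulf_eq0 (negbTE (expi_neq0 _)) orbF => /eqP[] /eqP.
rewrite mulf_eq0 pnatr_eq0 /= -sgr_eq0 sgr_sin ?sgr_eq0 ?subr_eq0.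
  by move=> /eqP e; rewrite -[t]half -[u]half e.
have pi0 := pi_gt0 R; apply/andP; split; lra.
Qed.

Lemma expi_surj (z : C) : `|z| = 1 -> exists2 t, 0 <= t < 2 * pi & z = E t.
Proof.
move=> z1; have := add_Re2_Im2 z; rewrite z1 expr1n {z1} => /(congr1 (@complex.Re R)).
case: z => a b /= ab1; have pi0 := pi_gt0 R.
have a1 : -1 <= a <= 1 by apply/andP; split; nra.
have sqrt_b : Num.sqrt (1 - a ^+ 2) = `|b| by rewrite -sqrtr_sqr; congr Num.sqrt; lra.
have acos_a := acos_lepi a1; have acosK_a : cos (acos a) = a by rewrite acosK ?in_itv.
have [b0|b0] := lerP 0 b.
  exists (acos a); first by rewrite acos_ge0 //=; lra.
  by rewrite /expi acosK_a sin_acos // sqrt_b ger0_norm.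
have acos_gt0 : 0 < acos a by apply: acos_gt0; apply/andP; split; nra.
exists (2 * pi - acos a); first by apply/andP; split; lra.
rewrite /expi (_ : 2 * pi - acos a = - acos a + pi *+ 2); last by rewrite mulr2n; ring.
by rewrite cosD2pi sinD2pi cosN sinN acosK_a sin_acos // sqrt_b ltr0_norm // opprK.
Qed.

Lemma expi_half_angle (r z : C) : `|r| = 1 -> `|z| = 1 -> z != r ->
  exists2 t, 0 < t < pi & z = r * E (2 * t).
Proof.
move=> r1 z1 zr; have r0 : r != 0 by rewrite -normr_eq0 r1 oner_neq0.
have [t /andP[t0 t2] e] : exists2 t, 0 <= t < 2 * pi & z / r = E t.
  by apply: expi_surj; rewrite normf_div r1 z1 divr1.
have {e}ez : z = r * E t by rewrite -e mulrC divfK.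
have t_neq0 : t != 0 by apply: contraNneq zr => t_0; rewrite ez t_0 expi0 mulr1.
have t_gt0 : 0 < t by rewrite lt_def t_neq0 t0.
exists (t / 2); first by have pi0 := pi_gt0 R; apply/andP; split; lra.
by rewrite ez (_ : 2 * (t / 2) = t) //; field.
Qed.

Lemma ccw_arc_expi (a : C) (p t : R) : a != 0 -> 0 < p < 2 * pi -> 0 < t < 2 * pi ->
  ccw_arc a (a * E p) (a * E t) <-> t < p.
Proof.
move=> a0 /andP[p0 p2] /andP[t0 t2]; split=> [|tp]; last by exists p, t.
case=> th [s [s0 sth th2 /(mulfI a0) ep /(mulfI a0) et]].
have -> : p = th by apply: expi_inj => //; apply/andP; split; lra.
suff -> : t = s by [].
by apply: expi_inj => //; apply/andP; split; lra.
Qed.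

Lemma ccw_arc_expi_rev (a : C) (p t : R) : a != 0 -> 0 < p < 2 * pi -> 0 < t < 2 * pi ->
  t != p -> ccw_arc (a * E p) a (a * E t) <-> p < t.
Proof.
move=> a0 /andP[p0 p2] /andP[t0 t2] tp.
have ap0 : a * E p != 0 by rewrite mulf_neq0 ?expi_neq0.
have shift s q : s = p + q -> a * E s = a * E p * E q by move=> ->; rewrite expiD mulrA.
have back : a = a * E p * E (2 * pi - p).
  by rewrite -(shift (2 * pi) (2 * pi - p)) ?expi_2pi ?mulr1 //; ring.
rewrite [X in ccw_arc _ X]back.
have [pt|tp'|/eqP] := ltgtP p t; last by rewrite eq_sym (negbTE tp).
  rewrite (shift t (t - p)); last by ring.
  by rewrite ccw_arc_expi //; [split=> _; lra|apply/andP; split; lra..].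
have -> : E t = E (t + 2 * pi) by rewrite expiD expi_2pi mulr1.
rewrite (shift (t + 2 * pi) (t - p + 2 * pi)); last by ring.
by rewrite ccw_arc_expi //; [split=> h; lra|apply/andP; split; lra..].
Qed.

Lemma interlace_expi (a : C) (p t u : R) : a != 0 ->
  0 < p < 2 * pi -> 0 < t < 2 * pi -> 0 < u < 2 * pi -> t != p -> u != p ->
  interlace a (a * E p) (a * E t) (a * E u) <-> (p < t) (+) (p < u).
Proof.
move=> a0 hp ht hu tp up.
rewrite /interlace !ccw_arc_expi // !ccw_arc_expi_rev //.
have flip x : x != p -> (x < p) = ~~ (p < x).
  by move=> xp; rewrite ltNge le_eqVlt eq_sym (negbTE xp).
by rewrite !flip //; case: (p < t); case: (p < u); intuition.
Qed.

Lemma chord_product_expi (r : C) (x a b : R) : `|r| = 1 ->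
  (r * E (2 * x) - r * E (2 * b))^* * (r * E (2 * x) - r * E (2 * a)) =
  (4 * sin (x - b) * sin (x - a))%:C * E (a - b).
Proof.
move=> r1; rewrite -!mulrBr !expi_sub !rmorphM /= -expiN.
transitivity ((r^* * r) * (((2 * sin (x - b)) *i)^* * (2 * sin (x - a)) *i) *
              (E (- (x + b)) * E (x + a))); first by ring.
rewrite -normCKC r1 expr1n mul1r -expiD (_ : - (x + b) + (x + a) = a - b); last by ring.
by congr (_ * _); simpc; congr (_ +i* _); ring.
Qed.

Lemma sin_sub_mul_lt0 (y a b : R) : 0 < y < pi -> 0 < a < pi -> 0 < b < pi ->
  a != y -> b != y -> (sin (y - b) * sin (y - a) < 0) = (y < a) (+) (y < b).
Proof.
move=> /andP[y0 y1] ha hb ay byy.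
have sg_sin x : 0 < x < pi -> Num.sg (sin (y - x)) = Num.sg (y - x).
  by move=> /andP[x0 x1]; apply: sgr_sin; apply/andP; split; lra.
have sin_lt0 x : 0 < x < pi -> (sin (y - x) < 0) = (y < x).
  by move=> hx; rewrite -sgr_lt0 sg_sin // sgr_lt0 subr_lt0.
have sin_neq0 x : 0 < x < pi -> x != y -> sin (y - x) != 0.
  by move=> hx xy; rewrite -sgr_eq0 sg_sin // sgr_eq0 subr_eq0 eq_sym.
by rewrite neq0_mulr_lt0 ?sin_neq0 // !sin_lt0 // addbC.
Qed.

(* With r2, s1, s2 = r1 E(2y), r1 E(2a), r1 E(2b), chord_product_expi gives
   k_1 = 4 sin b sin a E(a - b) and k_2 = 4 sin (y - b) sin (y - a) E(a - b). *)
Lemma interlace_phase (r1 r2 s1 s2 : C) :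
  `|r1| = 1 -> `|r2| = 1 -> `|s1| = 1 -> `|s2| = 1 -> r1 != r2 ->
  [/\ r1 != s1, r1 != s2, r2 != s1 & r2 != s2] ->
  exists (rho1 rho2 : R) (z : C), [/\ z != 0,
    (r1 - s2)^* * (r1 - s1) = rho1%:C * z, (r2 - s2)^* * (r2 - s1) = rho2%:C * z
    & interlace r1 r2 s1 s2 <-> rho1 * rho2 < 0].
Proof.
move=> r1u r2u s1u s2u r12 [r1s1 r1s2 r2s1 r2s2].
have r10 : r1 != 0 by rewrite -normr_eq0 r1u oner_neq0.
have angle z : `|z| = 1 -> r1 != z -> exists2 q, 0 < q < pi & z = r1 * E (2 * q).
  by move=> z1 r1z; apply: expi_half_angle; rewrite // eq_sym.
have [y hy er2] := angle _ r2u r12.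
have [a ha es1] := angle _ s1u r1s1.
have [b hb es2] := angle _ s2u r1s2.
have ay : a != y by apply: contraNneq r2s1 => ay; rewrite er2 es1 ay.
have byy : b != y by apply: contraNneq r2s2 => byy; rewrite er2 es2 byy.
exists (4 * sin b * sin a), (4 * sin (y - b) * sin (y - a)), (E (a - b)); split.
- exact: expi_neq0.
- have := chord_product_expi 0 a b r1u; rewrite mulr0 expi0 mulr1 -es1 -es2 => ->.
  by congr (_%:C * _); rewrite !sub0r !sinN; ring.
- by rewrite er2 es1 es2 chord_product_expi.
have pi0 := pi_gt0 R.
have dbl x : 0 < x < pi -> 0 < 2 * x < 2 * pi by move=> /andP[? ?]; apply/andP; split; lra.
have dbl_neq x : x != y -> 2 * x != 2 * y by apply: contra => /eqP e; apply/eqP; lra.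
rewrite er2 es1 es2 interlace_expi ?dbl ?dbl_neq // !ltr_pM2l //.
have rho1_gt0 : 0 < 4 * sin b * sin a by rewrite !mulr_gt0 ?sin_gt0_pi.
by rewrite pmulr_rlt0 // -mulrA pmulr_rlt0 // sin_sub_mul_lt0.
Qed.

End UnitCircle.

Section Matrix2.
Variable F : fieldType.
Implicit Types (A : 'M[F]_2) (u v : 'cV[F]_2).

Lemma ord2P (i : 'I_2) : i = 0 \/ i = 1.
Proof. by case: i => [[|[|//]]] ?; [left|right]; apply: val_inj. Qed.

Lemma mulmx2E m n (A : 'M[F]_(m, 2)) (B : 'M[F]_(2, n)) i j :
  (A *m B) i j = A i 0 * B 0 j + A i 1 * B 1 j.
Proof. by rewrite mxE big_ord_recl big_ord1 (_ : lift 0 ord0 = 1) //; apply: val_inj. Qed.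

Lemma cV2P u v : u 0 0 = v 0 0 -> u 1 0 = v 1 0 -> u = v.
Proof.
by move=> e0 e1; apply/matrixP => i j; rewrite (ord1 j); case: (ord2P i) => ->.
Qed.

Definition mx2 (a b c d : F) : 'M[F]_2 :=
  \matrix_(i, j) if i == 0 then (if j == 0 then a else b) else (if j == 0 then c else d).

Lemma mx2_eta A : A = mx2 (A 0 0) (A 0 1) (A 1 0) (A 1 1).
Proof.
by apply/matrixP => i j; rewrite mxE; case: (ord2P i) => ->; case: (ord2P j) => ->.
Qed.

Lemma mx2_inj a b c d a' b' c' d' :
  mx2 a b c d = mx2 a' b' c' d' -> [/\ a = a', b = b', c = c' & d = d'].
Proof.
move=> e; have entry i j := congr1 (fun A : 'M_2 => A i j) e.
by split; [have := entry 0 0|have := entry 0 1|have := entry 1 0|have := entry 1 1];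
  rewrite !mxE.
Qed.

Lemma mulmx_mx2 a b c d a' b' c' d' : mx2 a b c d *m mx2 a' b' c' d' =
  mx2 (a * a' + b * c') (a * b' + b * d') (c * a' + d * c') (c * b' + d * d').
Proof. by rewrite [LHS]mx2_eta !mulmx2E !mxE. Qed.

Lemma scale_mx2 k a b c d : k *: mx2 a b c d = mx2 (k * a) (k * b) (k * c) (k * d).
Proof. by rewrite [LHS]mx2_eta !mxE. Qed.

Lemma scalar_mx2 k : k%:M = mx2 k 0 0 k.
Proof. by rewrite [LHS]mx2_eta !mxE. Qed.

Lemma trmx_mx2 a b c d : (mx2 a b c d)^T = mx2 a c b d.
Proof. by rewrite [LHS]mx2_eta !mxE. Qed.

Lemma map_mx2 (f : F -> F) a b c d : map_mx f (mx2 a b c d) = mx2 (f a) (f b) (f c) (f d).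
Proof. by rewrite [LHS]mx2_eta !mxE. Qed.

Lemma mx2_unit a b c d : a * d - b * c != 0 -> mx2 a b c d \in unitmx.
Proof.
move=> det0; suff /mulmx1_unit[] :
  mx2 a b c d *m ((a * d - b * c)^-1 *: mx2 d (- b) (- c) a) = 1%:M by [].
by rewrite -scalemxAr mulmx_mx2 scale_mx2 scalar_mx2; congr mx2; field.
Qed.

Definition col2mx u v : 'M[F]_2 := mx2 (u 0 0) (v 0 0) (u 1 0) (v 1 0).

Lemma mulmx_col2mx A u v : A *m col2mx u v = col2mx (A *m u) (A *m v).
Proof. by rewrite [A]mx2_eta mulmx_mx2 /col2mx !mulmx2E !mxE. Qed.

End Matrix2.

Section Eigenvectors.
Variables (F : fieldType) (n : nat).
Implicit Types (A B : 'M[F]_n) (v w : 'cV[F]_n).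

Lemma col_eigenvector A a : eigenvalue A a -> exists2 v : 'cV_n, v != 0 & A *m v = a *: v.
Proof.
move=> /eigenvalueP[u uA u0].
have : \det (A - a%:M) == 0.
  by apply/det0P; exists u => //; rewrite mulmxBr uA mul_mx_scalar subrr.
rewrite -det_tr => /det0P[x x0 xA]; exists x^T; first by rewrite trmx_eq0.
apply/eqP; rewrite -subr_eq0 -mul_scalar_mx -mulmxBl.
by rewrite -[A - _]trmxK -trmx_mul xA trmx0.
Qed.

Lemma eigenvalue1_mulmxV A B : B \in unitmx -> eigenvalue (A *m invmx B) 1 ->
  exists2 w : 'cV_n, w != 0 & A *m w = B *m w.
Proof.
move=> Bu /col_eigenvector[v v0 ABv]; exists (invmx B *m v).
  by apply: contraNneq v0 => e; rewrite -(mulKVmx Bu v) e mulmx0.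
by rewrite mulmxA ABv scale1r mulKVmx.
Qed.

Lemma eigenvector_root A a b c v : (A - a%:M) *m (A - b%:M) = 0 -> v != 0 ->
  A *m v = c *: v -> (c == a) || (c == b).
Proof.
move=> CH v0 Av; have := congr1 (mulmx^~ v) CH.
rewrite mul0mx -mulmxA [(A - b%:M) *m v]mulmxBl mul_scalar_mx Av -scalerBl -scalemxAr.
rewrite mulmxBl mul_scalar_mx Av -scalerBl scalerA => /eqP.
by rewrite scaler_eq0 (negbTE v0) orbF mulf_eq0 !subr_eq0 orbC.
Qed.

Lemma common_vector_not_eigen A B a1 a2 b1 b2 w :
  (A - a1%:M) *m (A - a2%:M) = 0 -> (B - b1%:M) *m (B - b2%:M) = 0 ->
  [/\ a1 != b1, a1 != b2, a2 != b1 & a2 != b2] -> w != 0 -> A *m w = B *m w ->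
  forall c, A *m w != c *: w.
Proof.
move=> CHA CHB [ab11 ab12 ab21 ab22] w0 ABw c; apply/negP => /eqP Awc.
have Bwc : B *m w = c *: w by rewrite -ABw.
case/orP: (eigenvector_root CHA w0 Awc) => /eqP ca;
  case/orP: (eigenvector_root CHB w0 Bwc) => /eqP cb;
  by move: ab11 ab12 ab21 ab22; rewrite -ca -cb eqxx.
Qed.

End Eigenvectors.

Section CyclicBases.
Variable F : fieldType.
Implicit Types (A B : 'M[F]_2) (w : 'cV[F]_2).

Lemma Cayley_Hamilton2 A (a b : F) : eigenvalue A a -> eigenvalue A b -> a != b ->
  (A - a%:M) *m (A - b%:M) = 0.
Proof.
rewrite !eigenvalue_root_char => ra rb ab.
have dvd : ('X - a%:P) * ('X - b%:P) %| char_poly A.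
  by rewrite Gauss_dvdp ?coprimep_XsubC2 ?subr_eq0 1?eq_sym // !dvdp_XsubCl ra rb.
have /eqP charE : ('X - a%:P) * ('X - b%:P) == char_poly A.
  rewrite -eqp_monic ?monicMl ?monicXsubC ?char_poly_monic // -dvdp_size_eqp //.
  by rewrite size_char_poly size_mul ?polyXsubC_eq0 // !size_XsubC.
by have := Cayley_Hamilton A; rewrite -charE rmorphM /= !rmorphB /= horner_mx_X !horner_mx_C.
Qed.

Lemma col2mx_cyclic_unit A w : w != 0 -> (forall c, A *m w != c *: w) ->
  col2mx (A *m w) w \in unitmx.
Proof.
move=> w0 noeig; apply: mx2_unit; apply/negP => det0.
suff [c Awc] : exists c, A *m w = c *: w by case/negP: (noeig c); rewrite Awc.
move: (A *m w) det0 => u det0.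
have [w00|w00] := eqVneq (w 0 0) 0.
  have w10 : w 1 0 != 0.
    by apply: contraNneq w0 => w10; apply/eqP; apply: cV2P; rewrite ?w00 ?w10 mxE.
  exists (u 1 0 / w 1 0); apply: cV2P; rewrite !mxE ?divfK // w00 mulr0.
  by apply/eqP; move: det0; rewrite w00 mul0r subr0 mulf_eq0 (negbTE w10) orbF.
exists (u 0 0 / w 0 0); apply: cV2P; rewrite !mxE ?divfK //.
have uw : u 0 0 * w 1 0 = w 0 0 * u 1 0 by apply/eqP; rewrite -subr_eq0 det0.
by rewrite mulrAC uw mulrC mulKf.
Qed.

Lemma mulmx_cyclic A a b w : (A - a%:M) *m (A - b%:M) = 0 ->
  A *m col2mx (A *m w) w = col2mx (A *m w) w *m mx2 (a + b) 1 (- (a * b)) 0.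
Proof.
move=> CH; have AAw : A *m (A *m w) = (a + b) *: (A *m w) - (a * b) *: w.
  have := congr1 (mulmx^~ w) CH; rewrite mul0mx -mulmxA !mulmxBl !mul_scalar_mx.
  rewrite mulmxBr -scalemxAr => /matrixP h; apply/matrixP => i j.
  move: (h i j); rewrite !mxE => e.
  by apply/eqP; rewrite -subr_eq0; apply/eqP; rewrite -[RHS]e; ring.
by rewrite mulmx_col2mx AAw /col2mx mulmx_mx2 !mxE; congr mx2; ring.
Qed.

(* P is the eigenbasis of A in which w has coordinates (1, 1).  The columns of
   M are then the coordinates of (B - b_2) w and (B - b_1) w, i.e. of
   (A - b_2) w and (A - b_1) w, which are eigenvectors of B for b_1 and b_2. *)
Lemma common_cyclic_bases A B (a1 a2 b1 b2 : F) w :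
  (A - a1%:M) *m (A - a2%:M) = 0 -> (B - b1%:M) *m (B - b2%:M) = 0 ->
  a1 != a2 -> b1 != b2 -> col2mx (A *m w) w \in unitmx -> A *m w = B *m w ->
  exists2 P, P \in unitmx &
    let M := mx2 (a1 - b2) (a1 - b1) (a2 - b2) (a2 - b1) in
    [/\ A *m P = P *m mx2 a1 0 0 a2, P *m M \in unitmx
      & B *m (P *m M) = P *m M *m mx2 b1 0 0 b2].
Proof.
move=> CHA CHB a12 b12 Ku ABw; set K := col2mx (A *m w) w.
have a12' : a1 - a2 != 0 by rewrite subr_eq0.
pose N := (a1 - a2)^-1 *: mx2 1 (-1) (- a2) a1.
exists (K *m N).
  by rewrite unitmx_mul Ku /N scale_mx2 mx2_unit // (_ : _ - _ = (a1 - a2)^-1) ?invr_eq0 //; field.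
move=> M; have -> : K *m N *m M = K *m mx2 1 1 (- b2) (- b1).
  by rewrite -mulmxA /N scale_mx2 !mulmx_mx2; congr mx2; field.
split.
- by rewrite mulmxA (mulmx_cyclic _ CHA) -!mulmxA /N scale_mx2 !mulmx_mx2; congr mx2; field.
- rewrite unitmx_mul Ku mx2_unit // (_ : _ - _ = - (b1 - b2)); last by ring.
  by rewrite oppr_eq0 subr_eq0.
rewrite /K ABw mulmxA (mulmx_cyclic _ CHB) -!mulmxA !mulmx_mx2.
by congr mx2; ring.
Qed.

End CyclicBases.

Section HermitianForms.
Variable R : realType.
Local Notation C := R[i].
Implicit Types (H A P D G : 'M[C]_2) (v w : 'cV[C]_2).

Lemma trmxC_mul m n p (A : 'M[C]_(m, n)) (B : 'M[C]_(n, p)) :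
  (A *m B) ^t* = B ^t* *m A ^t*.
Proof. by rewrite trmx_mul map_mxM. Qed.

Lemma trmxC1 n : (1%:M : 'M[C]_n) ^t* = 1%:M.
Proof. by rewrite trmx1 map_mx1. Qed.

Lemma trmxC_mx2 (a b c d : C) : (mx2 a b c d) ^t* = mx2 a^* c^* b^* d^*.
Proof. by rewrite trmx_mx2 map_mx2. Qed.

Lemma conjC_real (x : R) : (x%:C)^* = x%:C.
Proof. exact: conjc_real. Qed.

Lemma congr_mxK P H : P \in unitmx -> (invmx P) ^t* *m (P ^t* *m H *m P) *m invmx P = H.
Proof.
move=> Pu; rewrite !mulmxA -trmxC_mul mulmxV // trmxC1 mul1mx.
by rewrite -mulmxA mulmxV // mulmx1.
Qed.

Lemma congr_mxKV P H : P \in unitmx -> P ^t* *m ((invmx P) ^t* *m H *m invmx P) *m P = H.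
Proof.
move=> Pu; rewrite !mulmxA -trmxC_mul mulVmx // trmxC1 mul1mx.
by rewrite -mulmxA mulVmx // mulmx1.
Qed.

Lemma unitmx_mulmx_eq0 P v : P \in unitmx -> (P *m v == 0) = (v == 0).
Proof.
move=> Pu; apply/idP/idP => [/eqP Pv0|/eqP ->]; last by rewrite mulmx0.
by rewrite -(mulKmx Pu v) Pv0 mulmx0.
Qed.

Lemma hformE H v w : hform H v w = (v ^t* *m H *m w) 0 0.
Proof. by rewrite /hform map_trmx. Qed.

Lemma hform_mulmx H A v w : hform H (A *m v) (A *m w) = hform (A ^t* *m H *m A) v w.
Proof. by rewrite !hformE trmxC_mul !mulmxA. Qed.

Lemma hform_delta H i j : hform H (delta_mx i 0) (delta_mx j 0) = H i j.
Proof.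
rewrite hformE (_ : _ ^t* = delta_mx 0 i); last first.
  by apply/matrixP => k l; rewrite !mxE (ord1 k) eqxx; case: (l == i); rewrite ?conjC1 ?conjC0.
by rewrite -rowE -colE !mxE.
Qed.

Lemma hform_diag (x y : C) v :
  hform (mx2 x 0 0 y) v v = x * `|v 0 0| ^+ 2 + y * `|v 1 0| ^+ 2.
Proof. by rewrite hformE !mulmx2E !mxE /= !normCKC; ring. Qed.

Lemma hermitian_congr H P : hermitian_mx H -> hermitian_mx (P ^t* *m H *m P).
Proof. by rewrite /hermitian_mx => herm; rewrite !trmxC_mul trmxCK herm mulmxA. Qed.

Lemma hermitian_mx2_real (x y : R) : hermitian_mx (mx2 x%:C 0 0 y%:C).
Proof. by rewrite /hermitian_mx trmxC_mx2 !conjC_real ?conjC0. Qed.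

Lemma hermitian_diag_real G : hermitian_mx G -> G 0 1 = 0 -> G 1 0 = 0 ->
  exists x y : R, G = mx2 x%:C 0 0 y%:C.
Proof.
move=> herm G01 G10; have real i : exists x : R, G i i = x%:C.
  by apply/complex_realP/CrealP; move/matrixP/(_ i i): herm; rewrite !mxE.
have [[x Gx] [y Gy]] := (real 0, real 1).
by exists x, y; rewrite [G]mx2_eta G01 G10 Gx Gy.
Qed.

Lemma unitmx_nondegenerate H : H \in unitmx -> nondegenerate_form H.
Proof.
move=> Hu v vH; apply/matrixP => i j; rewrite (ord1 j) mxE.
have := vH (invmx H *m delta_mx i 0).
by rewrite hformE !mulmxA mulmxK // -colE !mxE => /eqP; rewrite conjC_eq0 => /eqP.
Qed.

Lemma invariant_formP H A : invariant_form H A <-> A ^t* *m H *m A = H.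
Proof.
split=> [inv|AHA v w]; last by rewrite hform_mulmx AHA.
by apply/matrixP => i j; rewrite -hform_delta -hform_mulmx inv hform_delta.
Qed.

Lemma invariant_form_basis H A P D : P \in unitmx -> A *m P = P *m D ->
  invariant_form H A <-> D ^t* *m (P ^t* *m H *m P) *m D = P ^t* *m H *m P.
Proof.
move=> Pu AP; rewrite invariant_formP.
have -> : D ^t* *m (P ^t* *m H *m P) *m D = P ^t* *m (A ^t* *m H *m A) *m P.
  transitivity ((A *m P) ^t* *m H *m (A *m P)); last by rewrite trmxC_mul !mulmxA.
  by rewrite AP trmxC_mul !mulmxA.
split=> [-> //|/(congr1 (fun X => (invmx P) ^t* *m X *m invmx P))].
by rewrite !congr_mxK.
Qed.

Lemma diag_unitary_fixed (a b : C) G : `|a| = 1 -> `|b| = 1 -> a != b ->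
  (mx2 a 0 0 b) ^t* *m G *m mx2 a 0 0 b = G <-> G 0 1 = 0 /\ G 1 0 = 0.
Proof.
have unit_conj (c : C) : `|c| = 1 -> c^* = c^-1 /\ c != 0.
  by move=> c1; rewrite invC_norm c1 expr1n invr1 mul1r -normr_eq0 c1 oner_neq0.
move=> /unit_conj[ca a0] /unit_conj[cb b0] ab.
have off (c d g : C) : c != 0 -> c != d -> c^-1 * g * d = g -> g = 0.
  move=> c0 cd e; have : (c^-1 * d - 1) * g == 0 by rewrite mulrBl mul1r mulrAC e subrr.
  rewrite mulf_eq0 subr_eq0 => /orP[/eqP cd1|/eqP //]; case/eqP: cd.
  by rewrite -(mulVKf c0 d) cd1 mulr1.
rewrite {1 2}[G]mx2_eta trmxC_mx2 conjC0 ca cb !mulmx_mx2 !mul0r !mulr0 !add0r !addr0.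
split=> [/mx2_inj[_ e01 e10 _]|[-> ->]]; last by congr mx2; field; rewrite ?a0 ?b0.
by split; [exact: off e01|apply: off e10; rewrite // eq_sym].
Qed.

Lemma gram_diag_mx2 (M : 'M[C]_2) (x y : R) :
  let k := x%:C * ((M 0 0)^* * M 0 1) + y%:C * ((M 1 0)^* * M 1 1) in
  (M ^t* *m mx2 x%:C 0 0 y%:C *m M) 0 1 = k /\ (M ^t* *m mx2 x%:C 0 0 y%:C *m M) 1 0 = k^*.
Proof.
rewrite [M]mx2_eta trmxC_mx2 !mulmx_mx2 !mxE /=; split; first by ring.
by rewrite rmorphD !rmorphM /= !conjC_real !conjCK; ring.
Qed.

Lemma invariant_forms_gram H A B P M (a1 a2 b1 b2 : C) :
  `|a1| = 1 -> `|a2| = 1 -> `|b1| = 1 -> `|b2| = 1 -> a1 != a2 -> b1 != b2 ->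
  P \in unitmx -> P *m M \in unitmx ->
  A *m P = P *m mx2 a1 0 0 a2 -> B *m (P *m M) = P *m M *m mx2 b1 0 0 b2 ->
  hermitian_mx H ->
  invariant_form H A /\ invariant_form H B <->
  exists x y : R, P ^t* *m H *m P = mx2 x%:C 0 0 y%:C /\
    x%:C * ((M 0 0)^* * M 0 1) + y%:C * ((M 1 0)^* * M 1 1) = 0.
Proof.
move=> a1u a2u b1u b2u a12 b12 Pu Qu AP BQ herm.
rewrite (invariant_form_basis _ Pu AP) (invariant_form_basis _ Qu BQ) !diag_unitary_fixed //.
rewrite (_ : (P *m M) ^t* *m H *m (P *m M) = M ^t* *m (P ^t* *m H *m P) *m M); last first.
  by rewrite trmxC_mul !mulmxA.
split=> [[[G01 G10] [k0 _]]|[x [y [-> k0]]]].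
  have [x [y Gxy]] := hermitian_diag_real (hermitian_congr P herm) G01 G10.
  by exists x, y; split; rewrite // -(gram_diag_mx2 M x y).1 -Gxy.
by have [-> ->] := gram_diag_mx2 M x y; rewrite k0 conjC0 !mxE.
Qed.

Lemma gram_diag_line P (k1 k2 z : C) (rho1 rho2 : R) :
  P \in unitmx -> z != 0 -> rho2 != 0 -> k1 = rho1%:C * z -> k2 = rho2%:C * z ->
  let H := (invmx P) ^t* *m mx2 rho2%:C 0 0 (- rho1)%:C *m invmx P in
  forall H', (exists x y : R, P ^t* *m H' *m P = mx2 x%:C 0 0 y%:C /\
                             x%:C * k1 + y%:C * k2 = 0) <->
             exists c : R, H' = c%:C *: H.
Proof.
move=> Pu z0 rho2_0 -> -> H H'; split=> [[x [y [PH'P xy]]]|[c ->]].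
  have {}xy : x * rho1 + y * rho2 = 0.
    move: xy; rewrite !mulrA -mulrDl -!rmorphM -rmorphD /= => /eqP.
    by rewrite mulf_eq0 (negbTE z0) orbF fmorph_eq0 => /eqP.
  have ey : y = x / rho2 * - rho1.
    apply: (mulIf rho2_0); rewrite (_ : y * rho2 = - (x * rho1)); first by field.
    by apply/eqP; rewrite -addr_eq0 addrC xy.
  exists (x / rho2); rewrite -(congr_mxK H' Pu) PH'P /H scalemxAl scalemxAr scale_mx2 mulr0.
  by congr (_ *m mx2 _ _ _ _ *m _); rewrite -rmorphM /= ?ey //; congr _%:C; field.
exists (c * rho2), (c * - rho1); split; last by rewrite !rmorphM rmorphN /=; ring.
by rewrite -scalemxAr -scalemxAl congr_mxKV // scale_mx2 mulr0 !rmorphM.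
Qed.

Lemma definite_form_congr H P : P \in unitmx ->
  definite_form (P ^t* *m H *m P) <-> definite_form H.
Proof.
have congr (X K : 'M[C]_2) : X \in unitmx -> definite_form K -> definite_form (X ^t* *m K *m X).
  by move=> Xu [sgn|sgn]; [left|right] => v v0; rewrite -hform_mulmx sgn ?unitmx_mulmx_eq0.
move=> Pu; split; last exact: congr.
by move/(congr (invmx P)); rewrite congr_mxK // unitmx_inv => /(_ Pu).
Qed.

Lemma definite_form_diag (x y : R) : definite_form (mx2 x%:C 0 0 y%:C) <-> 0 < x * y.
Proof.
have ge0 (c : R) (z : C) : 0 <= c -> 0 <= c%:C * `|z| ^+ 2.
  by move=> c0; rewrite mulr_ge0 ?lecR ?exprn_ge0.
have pos (a b : R) v : 0 < a -> 0 < b -> v != 0 -> 0 < hform (mx2 a%:C 0 0 b%:C) v v.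
  move=> a0 b0 v0; rewrite hform_diag lt0r addr_ge0 ?ge0 ?ltW // andbT.
  rewrite paddr_eq0 ?ge0 ?ltW // !mulf_eq0 !normr_eq0 !orbb !fmorph_eq0.
  rewrite (gt_eqF a0) (gt_eqF b0) /=; apply: contra v0 => /andP[/eqP v00 /eqP v10].
  by apply/eqP; apply: cV2P; rewrite ?v00 ?v10 mxE.
have delta_neq0 i : (delta_mx i 0 : 'cV[C]_2) != 0.
  by apply/eqP => /matrixP/(_ i 0); rewrite !mxE !eqxx => /eqP; rewrite oner_eq0.
split=> [[sgn|sgn]|xy].
- have := sgn _ (delta_neq0 0); have := sgn _ (delta_neq0 1).
  by rewrite !hform_delta !mxE /= -[0]/(0%:C) !ltcR => y0 x0; apply: mulr_gt0.
- have := sgn _ (delta_neq0 0); have := sgn _ (delta_neq0 1).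
  by rewrite !hform_delta !mxE /= -[0]/(0%:C) !ltcR => y0 x0; rewrite -mulrNN mulr_gt0 ?oppr_gt0.
have [x0|x0|x0] := ltrgt0P x; last by rewrite x0 mul0r ltxx in xy.
  by left => v v0; apply: pos => //; rewrite -(pmulr_rgt0 _ x0).
right => v v0; rewrite -oppr_gt0.
have -> : - hform (mx2 x%:C 0 0 y%:C) v v = hform (mx2 (- x)%:C 0 0 (- y)%:C) v v.
  by rewrite !hform_diag !rmorphN /=; ring.
by apply: pos; rewrite ?oppr_gt0 // -(nmulr_rgt0 _ x0).
Qed.

End HermitianForms.

Theorem lemma24 (R : realType) (Rm Sm : 'M[R[i]]_2) (r1 r2 s1 s2 : R[i]) :
  Rm \in unitmx -> Sm \in unitmx ->
  diagonalizable Rm -> diagonalizable Sm ->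
  eigenvalue Rm r1 -> eigenvalue Rm r2 -> eigenvalue Sm s1 -> eigenvalue Sm s2 ->
  `|r1| = 1 -> `|r2| = 1 -> `|s1| = 1 -> `|s2| = 1 ->
  r1 != r2 -> s1 != s2 ->
  [/\ r1 != s1, r1 != s2, r2 != s1 & r2 != s2] ->
  eigenvalue (Rm *m invmx Sm) 1 ->
  exists H : 'M[R[i]]_2,
    [/\ [/\ hermitian_mx H, nondegenerate_form H,
            invariant_form H Rm & invariant_form H Sm],
        (forall H' : 'M[R[i]]_2,
            hermitian_mx H' -> nondegenerate_form H' ->
            invariant_form H' Rm -> invariant_form H' Sm ->
            exists c : R, H' = (c%:C) *: H)
      & (definite_form H <-> interlace r1 r2 s1 s2)].
Proof.
move=> _ Su _ _ eR1 eR2 eS1 eS2 r1u r2u s1u s2u r12 s12 rs eRS.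
have CHR := Cayley_Hamilton2 eR1 eR2 r12; have CHS := Cayley_Hamilton2 eS1 eS2 s12.
have [w w0 RSw] := eigenvalue1_mulmxV Su eRS.
have Ku := col2mx_cyclic_unit w0 (common_vector_not_eigen CHR CHS rs w0 RSw).
have [P Pu [RP Qu SQ]] := common_cyclic_bases CHR CHS r12 s12 Ku RSw.
have gram := invariant_forms_gram r1u r2u s1u s2u r12 s12 Pu Qu RP SQ.
rewrite !mxE /= in gram.
have [rho1 [rho2 [z [z0 k1 k2 interl]]]] := interlace_phase r1u r2u s1u s2u r12 rs.
have [r1s1 r1s2 r2s1 r2s2] := rs.
have rho_neq0 rho (k : R[i]) : k = rho%:C * z -> k != 0 -> rho != 0.
  by move=> ->; rewrite mulf_eq0 fmorph_eq0 negb_or => /andP[].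
have [rho1_0 rho2_0] : rho1 != 0 /\ rho2 != 0.
  by split; [apply: rho_neq0 k1 _|apply: rho_neq0 k2 _]; rewrite mulf_neq0 ?conjC_eq0 ?subr_eq0.
have line := gram_diag_line Pu z0 rho2_0 k1 k2.
pose G := mx2 rho2%:C 0 0 (- rho1)%:C.
pose H := (invmx P) ^t* *m G *m invmx P.
exists H; split.
- have herm := hermitian_congr (invmx P) (hermitian_mx2_real rho2 (- rho1)).
  have [invR invS] : invariant_form H Rm /\ invariant_form H Sm.
    by apply/(gram _ herm)/(line H); exists 1; rewrite scale1r.
  split => //; apply: unitmx_nondegenerate.
  rewrite /H !unitmx_mul map_unitmx unitmx_tr unitmx_inv Pu mx2_unit //=.
  by rewrite mulr0 subr0 -rmorphM fmorph_eq0 mulf_neq0 ?oppr_eq0.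
- by move=> H' herm' _ invR invS; apply/(line H')/(gram _ herm').
rewrite -(definite_form_congr _ Pu) congr_mxKV // definite_form_diag interl.
by rewrite mulrN oppr_gt0 mulrC.
Qed.
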